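(* Let $a,b,d$ be positive integers, $V = \mathbb{C}^a \oplus \mathbb{C}^b$ with basis $e_1,\ldots,e_a$ of $\mathbb{C}^a$ and $f_1,\ldots,f_b$ of $\mathbb{C}^b$, and $W = \bigotimes^d V$. Let the symmetric group $\mathfrak{S}_a$ act on $V$ by permuting $e_1,\ldots,e_a$ (i.e. via permutation matrices on $\mathbb{C}^a$) and trivially on $\mathbb{C}^b$, and diagonally on $W$. For $1\le i\le a$ let $\zeta_{i,b}:V\to V$ be the linear map with $\zeta_{i,b}(e_i)=f_b$ vanishing on all other basis vectors, and let $\varphi_{i,b}:W\to W$ be the linear map defined on basis tensors ($v_k\in\{e_1,\ldots,e_a,f_1,\ldots,f_b\}$) by \[ \varphi_{i,b}(v_1\otimes\cdots\otimes v_d) = \tfrac{1}{d}\sum_{k=1}^d v_1\otimes\cdots\otimes v_{k-1}\otimes \zeta_{i,b}(v_k)\otimes v_{k+1}\otimes\cdots\otimes v_d . \] Then the composition $\varphi_{1,b}\circ\varphi_{2,b}\circ\cdots\circ\varphi_{a,b}:W\to W$ maps $\mathfrak{S}_a$-invariant tensors to $\mathfrak{S}_a$-invariant tensors. *)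

From HB Require Import structures.
From mathcomp Require Import all_boot all_algebra all_fingroup.
From mathcomp Require Import reals complex.
Set Implicit Arguments. Unset Strict Implicit. Unset Printing Implicit Defensive.
Import GRing.Theory Num.Theory.
Local Open Scope ring_scope.

Section Defs.
Variables (K : fieldType) (a b d : nat).

(* Basis of V = K^a (+) K^b : inl i = e_(i+1), inr j = f_(j+1). *)
Definition bidx := ('I_a + 'I_b)%type.
Definition vec := {ffun bidx -> K}.
Definition unitv (k : bidx) : vec := [ffun l : bidx => (l == k)%:R].
(* Basis tensors of W = (x)^d V are indexed by d-tuples of basis indices;
   a tensor is its coordinate function in this basis. *)
Definition tidx := {ffun 'I_d -> bidx}.
Definition tens := {ffun tidx -> K}.
Definition btens (w : tidx) : tens := [ffun u : tidx => (u == w)%:R].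
Definition pure (x : 'I_d -> vec) : tens := [ffun u : tidx => \prod_(k < d) x k (u k)].
Definition linext (F : tidx -> tens) (T : tens) : tens :=
  [ffun u : tidx => \sum_(w : tidx) T w * F w u].

Definition zeta (i : 'I_a) (j : 'I_b) (k : bidx) : vec :=
  if k == inl i then unitv (inr j) else 0.
Definition phi_basis (i : 'I_a) (j : 'I_b) (w : tidx) : tens :=
  [ffun u : tidx => d%:R^-1 * \sum_(k < d)
     pure (fun l => if l == k then zeta i j (w l) else unitv (w l)) u].
Definition phi (i : 'I_a) (j : 'I_b) : tens -> tens := linext (phi_basis i j).

(* phi_{1,j} o phi_{2,j} o ... o phi_{a,j}  (indices shifted by one) *)
Definition phi_comp (j : 'I_b) (T : tens) : tens :=
  foldr (fun i S => phi i j S) T (enum 'I_a).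

Definition perm_bidx (s : {perm 'I_a}) (k : bidx) : bidx :=
  match k with inl i => inl (s i) | inr j => inr j end.
Definition act (s : {perm 'I_a}) : tens -> tens :=
  linext (fun w => btens [ffun l : 'I_d => perm_bidx s (w l)]).
Definition Sa_invariant (T : tens) : Prop := forall s : {perm 'I_a}, act s T = T.
End Defs.

From Pilot Require Import Defs.
From mathcomp Require Import all_boot all_algebra all_fingroup.
From mathcomp Require Import reals complex.
Set Implicit Arguments. Unset Strict Implicit. Unset Printing Implicit Defensive.
Import GRing.Theory.
Local Open Scope ring_scope.

(* The diagonal action of s intertwines phi_{i,j} with phi_{s i,j}, so it
   turns phi_{1,j} o ... o phi_{a,j} into the same maps composed in the order
   permuted by s.  For a fixed j the phi_{i,j} pairwise commute: the
   coefficients of phi_{i,j} o phi_{k,j} on basis tensors count ordered pairs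
   of distinct positions x, y holding e_k and e_i, both to be replaced by f_j,
   and swapping x and y exchanges i and k.  Hence the order of composition is
   irrelevant. *)

Section FoldrCommuting.
Variables (I : eqType) (X : Type) (f : I -> X -> X).
Hypothesis fC : forall x y t, f x (f y t) = f y (f x t).

Lemma foldr_rem t x s : x \in s -> foldr f t s = f x (foldr f t (rem x s)).
Proof.
elim: s => //= y s IHs; rewrite in_cons.
by case: (eqVneq y x) => [->|neq_yx] //= s_x; rewrite IHs // fC.
Qed.

Lemma foldr_perm_eq t s1 s2 : perm_eq s1 s2 -> foldr f t s1 = foldr f t s2.
Proof.
elim: s1 s2 => [|x s1 IHs] s2 eq_s12.
  by rewrite perm_sym in eq_s12; move/perm_nilP: eq_s12 => ->.
have s2x : x \in s2 by rewrite -(perm_mem eq_s12) mem_head.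
rewrite (foldr_rem t s2x) /=; congr (f x _); apply: IHs.
by rewrite -(perm_cons x) (perm_trans eq_s12) // perm_to_rem.
Qed.

End FoldrCommuting.

Lemma perm_eq_map_perm_enum (T : finType) (s : {perm T}) :
  perm_eq (map s (enum T)) (enum T).
Proof.
apply: uniq_perm; rewrite ?(map_inj_uniq perm_inj) ?enum_uniq // => x.
by rewrite mem_enum; apply/mapP; exists ((s^-1)%g x); rewrite ?mem_enum ?permKV.
Qed.

Section Tensors.
Variables (K : fieldType) (a b d : nat).
Implicit Types (s : {perm 'I_a}) (i : 'I_a) (j : 'I_b) (u v w : tidx a b d)
  (T : tens K a b d).

Definition tidx_upd w (k : 'I_d) (x : bidx a b) : tidx a b d :=
  [ffun l => if l == k then x else w l].

Lemma tidx_upd_same w k x : tidx_upd w k x k = x.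
Proof. by rewrite ffunE eqxx. Qed.

Lemma tidx_upd_other w k x l : l != k -> tidx_upd w k x l = w l.
Proof. by rewrite ffunE => /negbTE ->. Qed.

Lemma tidx_updC w k l x :
  tidx_upd (tidx_upd w k x) l x = tidx_upd (tidx_upd w l x) k x.
Proof. by apply/ffunP => m; rewrite !ffunE; case: (m == l); case: (m == k). Qed.

Lemma prod_eq_ffun u v :
  \prod_(l < d) ((u l == v l)%:R : K) = (u == v)%:R.
Proof.
case: (eqVneq u v) => [->|neq_uv]; first by rewrite big1 // => l _; rewrite eqxx.
have /forallPn[l neq_l] : ~~ [forall l, u l == v l].
  by apply: contra neq_uv => /forallP eq_uv; apply/eqP/ffunP => l; apply/eqP.
by rewrite (bigD1 l) //= (negbTE neq_l) mul0r.
Qed.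

Lemma sum_mul_eq (F : tidx a b d -> K) c : \sum_w F w * (w == c)%:R = F c.
Proof.
by rewrite (bigD1 c) //= eqxx mulr1 big1 ?addr0 // => w /negbTE ->; rewrite mulr0.
Qed.

Lemma phi_basisE i j w u :
  phi_basis K i j w u =
  d%:R^-1 * \sum_(k < d) (w k == inl i)%:R * (u == tidx_upd w k (inr j))%:R.
Proof.
rewrite ffunE; congr (_ * _); apply: eq_bigr => k _.
rewrite ffunE -prod_eq_ffun (bigD1 k) //= [in RHS](bigD1 k) //= eqxx.
rewrite tidx_upd_same mulrA; congr (_ * _).
  by rewrite /zeta; case: eqP => _; rewrite !ffunE ?mul1r ?mul0r.
by apply: eq_bigr => l neq_lk; rewrite (negbTE neq_lk) tidx_upd_other // ffunE.
Qed.

Definition phi2_coef i k j v u : K :=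
  \sum_w phi_basis K k j v w * phi_basis K i j w u.

Lemma phi_phiE i k j T :
  phi i j (phi k j T) = [ffun u => \sum_v T v * phi2_coef i k j v u].
Proof.
apply/ffunP => u; rewrite !ffunE.
under eq_bigr do rewrite ffunE mulr_suml.
rewrite exchange_big /=; apply: eq_bigr => v _; rewrite mulr_sumr.
by apply: eq_bigr => w _; rewrite mulrA.
Qed.

Lemma phi2_coefE i k j v u :
  phi2_coef i k j v u = d%:R^-1 * (d%:R^-1 * \sum_(x < d) \sum_(y < d)
    ((v x == inl k)%:R * (tidx_upd v x (inr j) y == inl i)%:R *
     (u == tidx_upd (tidx_upd v x (inr j)) y (inr j))%:R)).
Proof.
rewrite /phi2_coef.
under eq_bigr do rewrite phi_basisE -mulrA mulr_suml.
rewrite -mulr_sumr exchange_big /=; congr (_ * _).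
have sum_at_upd x : \sum_w (v x == inl k)%:R * (w == tidx_upd v x (inr j))%:R *
    phi_basis K i j w u = (v x == inl k)%:R * phi_basis K i j (tidx_upd v x (inr j)) u.
  rewrite -(sum_mul_eq (fun w => (v x == inl k)%:R * phi_basis K i j w u)).
  by apply: eq_bigr => w _; rewrite mulrAC.
under eq_bigr do rewrite sum_at_upd phi_basisE.
rewrite mulr_sumr; apply: eq_bigr => x _; rewrite mulrCA mulr_sumr.
by congr (_ * _); apply: eq_bigr => y _; rewrite mulrA.
Qed.

Lemma phi2_coefC i k j v u : phi2_coef i k j v u = phi2_coef k i j v u.
Proof.
rewrite !phi2_coefE [in RHS]exchange_big /=; do 2 congr (_ * _).
apply: eq_bigr => x _; apply: eq_bigr => y _.
have [->|neq_xy] := eqVneq x y; first by rewrite !tidx_upd_same !mulr0 !mul0r.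
have neq_yx : y != x by rewrite eq_sym.
by rewrite !tidx_upd_other // (tidx_updC v x) [X in X * _]mulrC.
Qed.

Lemma phiC i k j T : phi i j (phi k j T) = phi k j (phi i j T).
Proof.
rewrite !phi_phiE; apply/ffunP => u; rewrite !ffunE.
by apply: eq_bigr => v _; rewrite phi2_coefC.
Qed.

Definition act_tidx s w : tidx a b d :=
  [ffun l => perm_bidx s (w l)].

Lemma perm_bidxK s : cancel (@perm_bidx a b s) (perm_bidx s^-1).
Proof. by case=> //= i; rewrite permK. Qed.

Lemma perm_bidxKV s : cancel (@perm_bidx a b s^-1) (perm_bidx s).
Proof. by case=> //= i; rewrite permKV. Qed.

Lemma act_tidxK s : cancel (act_tidx s) (act_tidx s^-1).
Proof. by move=> w; apply/ffunP => l; rewrite !ffunE perm_bidxK. Qed.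

Lemma act_tidxKV s : cancel (act_tidx s^-1) (act_tidx s).
Proof. by move=> w; apply/ffunP => l; rewrite !ffunE perm_bidxKV. Qed.

Lemma actE s T u : Defs.act s T u = T (act_tidx s^-1 u).
Proof.
rewrite ffunE -(sum_mul_eq T); apply: eq_bigr => w _.
rewrite ffunE -[u in LHS](act_tidxKV s) (inj_eq (can_inj (act_tidxK s))).
by rewrite eq_sym.
Qed.

Lemma perm_bidx_eq_inl s (x : bidx a b) i :
  (perm_bidx s x == inl (s i)) = (x == inl i).
Proof. by case: x => [k|k] //=; rewrite !(inj_eq (@inl_inj _ _)) (inj_eq perm_inj). Qed.

Lemma act_tidx_upd s w k j :
  act_tidx s^-1 (tidx_upd (act_tidx s w) k (inr j)) = tidx_upd w k (inr j).
Proof. by apply/ffunP => l; rewrite !ffunE; case: eqP; rewrite ?ffunE ?perm_bidxK. Qed.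

Lemma phi_basis_act s i j w u :
  phi_basis K (s i) j (act_tidx s w) u = phi_basis K i j w (act_tidx s^-1 u).
Proof.
rewrite !phi_basisE; congr (_ * _); apply: eq_bigr => k _.
rewrite ffunE perm_bidx_eq_inl; congr (_ * _%:R).
by rewrite -(act_tidx_upd s w) (inj_eq (can_inj (act_tidxKV s))).
Qed.

Lemma act_phi s i j T :
  Defs.act s (phi i j T) = phi (s i) j (Defs.act s T).
Proof.
apply/ffunP => u; rewrite actE !ffunE.
rewrite [RHS](reindex_inj (can_inj (act_tidxK s))) /=.
by apply: eq_bigr => w _; rewrite actE act_tidxK phi_basis_act.
Qed.

Lemma act_foldr_phi s j T (r : seq 'I_a) :
  Defs.act s (foldr (fun i S => phi i j S) T r) =
  foldr (fun i S => phi i j S) (Defs.act s T) (map s r).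
Proof. by elim: r => //= i r IHr; rewrite act_phi IHr. Qed.

End Tensors.

Theorem claim3p1 (R : realType) (a b d : nat)
  (ha : (0 < a)%N) (hb : (0 < b)%N) (hd : (0 < d)%N)
  (j : 'I_b) (hj : nat_of_ord j = b.-1) (T : tens R[i] a b d) :
  Sa_invariant T -> Sa_invariant (phi_comp j T).
Proof.
move=> invT s; rewrite /phi_comp act_foldr_phi invT.
apply: foldr_perm_eq; last exact: perm_eq_map_perm_enum.
by move=> x y S; apply: phiC.
Qed.
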